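(* Let $d\ge3$ and $\beta>\beta^*(d)=\log\left(\frac{\sqrt{d-1}+1}{\sqrt{d-1}-1}\right)$. Then there exists $\varepsilon>0$ such that \[\mathcal{B}_{\mathrm{Ising}}(\pi^*_\varepsilon,\beta,d)>\log2+\frac d2\log\frac{1+e^{-\beta}}{2},\] where $\pi^*_\varepsilon=\frac12(\delta_{2\varepsilon}+\delta_{-2\varepsilon})$.
   Context: For a probability measure $\pi$ on $[-1,1]$ let $(\mu_{\pi,i})_{i\ge1}$ be independent samples from $\pi$, let $\Lambda(x)=x\log x$, and define the Bethe free energy \[\mathcal{B}_{\mathrm{Ising}}(\pi,\beta,d)=\mathbb{E}\left[\frac{\Lambda\left(\sum_{\sigma\in\{\pm1\}}\prod_{i=1}^d\left(1-(1-e^{-\beta})\frac{1+\sigma\mu_{\pi,i}}{2}\right)\right)}{2^{1-d}(1+e^{-\beta})^d}-\frac{d\,\Lambda\left(1-(1-e^{-\beta})\frac{1+\mu_{\pi,1}\mu_{\pi,2}}{2}\right)}{1+e^{-\beta}}\right].\] $\delta_x$ is the point mass at $x$. *)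

From Stdlib Require Import Reals List.
Import ListNotations.
Open Scope R_scope.

Definition Lambda (x : R) : R := x * ln x.

(* A finitely supported probability measure on [-1,1], given as a list of
   (atom, weight) pairs. *)
Definition fdist := list (R * R).

Definition is_prob_on_pm1 (p : fdist) : Prop :=
  (forall a w, In (a, w) p -> -1 <= a <= 1 /\ 0 <= w) /\
  fold_right (fun aw s => snd aw + s) 0 p = 1.

Fixpoint tuples (n : nat) (p : fdist) : list (list R * R) :=
  match n with
  | O => [([], 1)]
  | S n' => flat_map (fun aw => map (fun xp => (fst aw :: fst xp, snd aw * snd xp))
                                    (tuples n' p)) p
  end.

Definition expect_n (n : nat) (p : fdist) (f : list R -> R) : R :=
  fold_right (fun xp s => snd xp * f (fst xp) + s) 0 (tuples n p).

Definition bethe_integrand (beta : R) (d : nat) (mu : list R) : R :=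
  let q := 1 - exp (- beta) in
  Lambda (fold_right Rplus 0
            (map (fun sigma : R =>
                    fold_right Rmult 1
                      (map (fun m => 1 - q * ((1 + sigma * m) / 2)) mu))
                 [1; -1]))
    / (powerRZ 2 (1 - Z.of_nat d) * (1 + exp (- beta)) ^ d)
  - INR d * Lambda (1 - q * ((1 + nth 0 mu 0 * nth 1 mu 0) / 2))
    / (1 + exp (- beta)).

Definition bethe_ising (p : fdist) (beta : R) (d : nat) : R :=
  expect_n d p (bethe_integrand beta d).

Definition beta_star (d : nat) : R :=
  ln ((sqrt (INR d - 1) + 1) / (sqrt (INR d - 1) - 1)).

Definition pi_star (eps : R) : fdist := [(2 * eps, / 2); (- (2 * eps), / 2)].

(* Write t = e^{-β}, a = (1 + t)/2 and θ = (1 - t)/(1 + t) = tanh(β/2).  Every factor of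
   the integrand is a(1 ± θμ), so pulling out the powers of a turns the Bethe functional
   into (d/2) log a + E[Λ(V)]/2 - (d/2) E[Λ(Z)], where V = Π(1 - θμ_i) + Π(1 + θμ_i) has
   mean 2 and Z = 1 - θμ_1μ_2 has mean 1 under π*_ε.  Since Λ'' = 1/x, Taylor's formula
   gives E[Λ(V)] >= Λ(2) + Var V/(2 max V) and E[Λ(Z)] <= Var Z/(2 min Z).  With
   s = 2ε, Var V >= 2d(d-1)θ^4 s^4 and Var Z = θ^2 s^4, so the excess over
   log 2 + (d/2) log a is at least (d θ^2 s^4/4)((d-1)θ^2/(1+θs)^d - 1/(1-θs^2)), which is
   positive for small s exactly when (d-1)θ^2 > 1, i.e. when β > β*(d). *)

From Stdlib Require Import Reals List Lra Psatz.
From Coquelicot Require Import Coquelicot.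
Import ListNotations.
Open Scope R_scope.

Lemma nondecreasing_vanishing_at_1_sign (f f' : R -> R) :
  (forall c, 0 < c -> derivable_pt_lim f c (f' c)) ->
  (forall c, 0 < c -> 0 <= f' c) -> f 1 = 0 ->
  forall r, 0 < r -> 0 <= (r - 1) * f r.
Proof.
  intros Hder Hpos Hf1 r Hr.
  destruct (Rtotal_order r 1) as [Hlt | [-> | Hgt]].
  - destruct (MVT_cor2 f f' r 1 Hlt) as [c [Hmvt Hc]].
    { intros c Hc; apply Hder; lra. }
    replace ((r - 1) * f r) with ((r - 1) ^ 2 * f' c) by (rewrite Hf1 in Hmvt; nra).
    apply Rmult_le_pos; [apply pow2_ge_0 | apply Hpos; lra].
  - lra.
  - destruct (MVT_cor2 f f' 1 r Hgt) as [c [Hmvt Hc]].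
    { intros c Hc; apply Hder; lra. }
    replace ((r - 1) * f r) with ((r - 1) ^ 2 * f' c) by (rewrite Hf1 in Hmvt; nra).
    apply Rmult_le_pos; [apply pow2_ge_0 | apply Hpos; lra].
Qed.

Lemma xlnx_gap_sign_half_sq r : 0 < r ->
  (r - 1) * (r * ln r - r + 1 - (r - 1) ^ 2 / 2) <= 0.
Proof.
  intros Hr.
  assert (H := nondecreasing_vanishing_at_1_sign
                 (fun x => (x - / x) / 2 - ln x) (fun x => (x - 1) ^ 2 / (2 * x ^ 2))).
  assert (Hsign : 0 <= (r - 1) * ((r - / r) / 2 - ln r)).
  { apply H; auto.
    - intros c Hc. apply is_derive_Reals. auto_derive.
      + repeat split; nra.
      + field; lra.
    - intros c Hc; cbv beta.
      apply Rdiv_le_0_compat; [apply pow2_ge_0 | nra].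
    - rewrite ln_1; field. }
  replace (r * ln r - r + 1 - (r - 1) ^ 2 / 2) with (- r * ((r - / r) / 2 - ln r))
    by (field; lra).
  nra.
Qed.

Lemma xlnx_gap_sign_half_sq_div r : 0 < r ->
  0 <= (r - 1) * (r * ln r - r + 1 - (r - 1) ^ 2 / (2 * r)).
Proof.
  intros Hr.
  assert (H := nondecreasing_vanishing_at_1_sign
                 (fun x => ln x - 3 / 2 + 2 / x - 1 / (2 * x ^ 2))
                 (fun x => (x - 1) ^ 2 / x ^ 3)).
  assert (Hsign : 0 <= (r - 1) * (ln r - 3 / 2 + 2 / r - 1 / (2 * r ^ 2))).
  { apply H; auto.
    - intros c Hc. apply is_derive_Reals. auto_derive.
      + repeat split; nra.
      + field; lra.
    - intros c Hc; cbv beta.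
      apply Rdiv_le_0_compat; [apply pow2_ge_0 | apply pow_lt; lra].
    - rewrite ln_1; field. }
  replace (r * ln r - r + 1 - (r - 1) ^ 2 / (2 * r))
    with (r * (ln r - 3 / 2 + 2 / r - 1 / (2 * r ^ 2))) by (field; lra).
  nra.
Qed.

Lemma Rdiv_le_contravar_r a b c : 0 <= a -> 0 < b -> b <= c -> a / c <= a / b.
Proof.
  intros Ha Hb Hbc. apply Rmult_le_compat_l; [exact Ha |].
  apply Rinv_le_contravar; assumption.
Qed.

Lemma Lambda_tangent_gap z A : 0 < z -> 0 < A ->
  Lambda z - (Lambda A + (ln A + 1) * (z - A))
  = A * (z / A * ln (z / A) - z / A + 1).
Proof.
  intros Hz HA. unfold Lambda. rewrite ln_div by assumption. field. lra.
Qed.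

Lemma Lambda_tangent_lower z A M : 0 < z -> 0 < A -> z <= M -> A <= M ->
  Lambda A + (ln A + 1) * (z - A) + (z - A) ^ 2 / (2 * M) <= Lambda z.
Proof.
  intros Hz HA HzM HAM.
  assert (Hgap := Lambda_tangent_gap z A Hz HA).
  assert (Hr : 0 < z / A) by (apply Rdiv_lt_0_compat; assumption).
  set (r := z / A) in *.
  assert (Hzr : z = r * A) by (unfold r; field; lra).
  assert (Hsq := pow2_ge_0 (z - A)).
  destruct (Rtotal_order z A) as [Hlt | [-> | Hgt]].
  - assert (Hr1 : r < 1) by nra.
    pose proof (xlnx_gap_sign_half_sq r Hr).
    assert (Hphi : (r - 1) ^ 2 / 2 <= r * ln r - r + 1) by nra.
    assert ((z - A) ^ 2 / (2 * A) = A * ((r - 1) ^ 2 / 2)) by (unfold r; field; lra).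
    pose proof (Rmult_le_compat_l A _ _ ltac:(lra) Hphi).
    pose proof (Rdiv_le_contravar_r _ (2 * A) (2 * M) Hsq ltac:(lra) ltac:(lra)).
    lra.
  - replace ((A - A) ^ 2 / (2 * M)) with 0 by (field; lra). lra.
  - assert (Hr1 : 1 < r) by nra.
    pose proof (xlnx_gap_sign_half_sq_div r Hr).
    assert (Hphi : (r - 1) ^ 2 / (2 * r) <= r * ln r - r + 1) by nra.
    assert ((z - A) ^ 2 / (2 * z) = A * ((r - 1) ^ 2 / (2 * r))) by (unfold r; field; lra).
    pose proof (Rmult_le_compat_l A _ _ ltac:(lra) Hphi).
    pose proof (Rdiv_le_contravar_r _ (2 * z) (2 * M) Hsq ltac:(lra) ltac:(lra)).
    lra.
Qed.

Lemma Lambda_tangent_upper z A m : 0 < m -> m <= z -> m <= A ->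
  Lambda z <= Lambda A + (ln A + 1) * (z - A) + (z - A) ^ 2 / (2 * m).
Proof.
  intros Hm HmZ HmA.
  assert (Hgap := Lambda_tangent_gap z A ltac:(lra) ltac:(lra)).
  assert (Hr : 0 < z / A) by (apply Rdiv_lt_0_compat; lra).
  set (r := z / A) in *.
  assert (Hzr : z = r * A) by (unfold r; field; lra).
  assert (Hsq := pow2_ge_0 (z - A)).
  destruct (Rtotal_order z A) as [Hlt | [-> | Hgt]].
  - assert (Hr1 : r < 1) by nra.
    pose proof (xlnx_gap_sign_half_sq_div r Hr).
    assert (Hphi : r * ln r - r + 1 <= (r - 1) ^ 2 / (2 * r)) by nra.
    assert ((z - A) ^ 2 / (2 * z) = A * ((r - 1) ^ 2 / (2 * r))) by (unfold r; field; lra).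
    pose proof (Rmult_le_compat_l A _ _ ltac:(lra) Hphi).
    pose proof (Rdiv_le_contravar_r _ (2 * m) (2 * z) Hsq ltac:(lra) ltac:(lra)).
    lra.
  - replace ((A - A) ^ 2 / (2 * m)) with 0 by (field; lra). lra.
  - assert (Hr1 : 1 < r) by nra.
    pose proof (xlnx_gap_sign_half_sq r Hr).
    assert (Hphi : r * ln r - r + 1 <= (r - 1) ^ 2 / 2) by nra.
    assert ((z - A) ^ 2 / (2 * A) = A * ((r - 1) ^ 2 / 2)) by (unfold r; field; lra).
    pose proof (Rmult_le_compat_l A _ _ ltac:(lra) Hphi).
    pose proof (Rdiv_le_contravar_r _ (2 * m) (2 * A) Hsq ltac:(lra) ltac:(lra)).
    lra.
Qed.

Lemma Lambda_mul x y : 0 < x -> 0 < y -> Lambda (x * y) = y * Lambda x + x * Lambda y.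
Proof. intros Hx Hy. unfold Lambda. rewrite ln_mult by assumption. ring. Qed.

Definition mean (p : fdist) (g : R -> R) : R :=
  fold_right (fun aw s => snd aw * g (fst aw) + s) 0 p.

Lemma mean_ext p g h : (forall a, g a = h a) -> mean p g = mean p h.
Proof.
  intros H. induction p as [|aw p IH]; simpl; [reflexivity | rewrite IH, H; reflexivity].
Qed.

Lemma mean_scal p c g : mean p (fun a => c * g a) = c * mean p g.
Proof. induction p as [|aw p IH]; simpl; [ring | rewrite IH; ring]. Qed.

Lemma mean_le p g h : (forall aw, In aw p -> 0 <= snd aw /\ g (fst aw) <= h (fst aw)) ->
  mean p g <= mean p h.
Proof.
  induction p as [|aw p IH]; simpl; intros H; [lra |].
  destruct (H aw (or_introl eq_refl)) as [Hw Hgh].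
  pose proof (Rmult_le_compat_l _ _ _ Hw Hgh).
  assert (mean p g <= mean p h) by (apply IH; auto).
  lra.
Qed.

Definition prodm (h : R -> R) (l : list R) : R := fold_right Rmult 1 (map h l).

Lemma prodm_ext g h l : (forall m, g m = h m) -> prodm g l = prodm h l.
Proof. intros H. unfold prodm. rewrite (map_ext g h H). reflexivity. Qed.

Lemma prodm_scal c h l : prodm (fun m => c * h m) l = c ^ length l * prodm h l.
Proof. induction l as [|m l IH]; unfold prodm in *; simpl; [ring | rewrite IH; ring]. Qed.

Lemma prodm_mul g h l : prodm g l * prodm h l = prodm (fun m => g m * h m) l.
Proof. induction l as [|m l IH]; unfold prodm in *; simpl; [ring | rewrite <- IH; ring]. Qed.

Lemma prodm_bounds h c l : (forall m, In m l -> 0 < h m <= c) -> 0 < prodm h l <= c ^ length l.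
Proof.
  induction l as [|m l IH]; intros Hh; unfold prodm in *; simpl; [lra |].
  destruct (Hh m (or_introl eq_refl)).
  destruct IH as [IH1 IH2]; [intros x Hx; apply Hh; right; exact Hx |].
  split; [apply Rmult_lt_0_compat | apply Rmult_le_compat]; lra.
Qed.

Lemma expect_n_O p f : expect_n 0 p f = f [].
Proof. unfold expect_n; simpl; ring. Qed.

Lemma expect_n_S n p f :
  expect_n (S n) p f = mean p (fun a => expect_n n p (fun l => f (a :: l))).
Proof.
  unfold expect_n, mean; simpl.
  generalize (tuples n p) as T; intros T.
  induction p as [|aw p IH]; simpl; [reflexivity |].
  rewrite fold_right_app, IH.
  match goal with |- _ = _ + ?rest => generalize rest as acc; intros acc end.
  clear IH; induction T as [|xp T IHT]; simpl; [ring | rewrite IHT; ring].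
Qed.

Lemma expect_n_ext n p f g : (forall l, f l = g l) -> expect_n n p f = expect_n n p g.
Proof.
  intros H. unfold expect_n.
  induction (tuples n p) as [|xp T IH]; simpl; [reflexivity | rewrite IH, H; reflexivity].
Qed.

Lemma expect_n_plus n p f g :
  expect_n n p (fun l => f l + g l) = expect_n n p f + expect_n n p g.
Proof.
  unfold expect_n. induction (tuples n p) as [|xp T IH]; simpl; [ring | rewrite IH; ring].
Qed.

Lemma expect_n_minus n p f g :
  expect_n n p (fun l => f l - g l) = expect_n n p f - expect_n n p g.
Proof.
  unfold expect_n. induction (tuples n p) as [|xp T IH]; simpl; [ring | rewrite IH; ring].
Qed.

Lemma expect_n_scal n p c f : expect_n n p (fun l => c * f l) = c * expect_n n p f.
Proof.
  unfold expect_n. induction (tuples n p) as [|xp T IH]; simpl; [ring | rewrite IH; ring].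
Qed.

Lemma expect_n_prod n p h : expect_n n p (prodm h) = mean p h ^ n.
Proof.
  induction n as [|n IH].
  - rewrite expect_n_O. reflexivity.
  - rewrite expect_n_S, (mean_ext _ _ (fun a => mean p h ^ n * h a)).
    + rewrite mean_scal. simpl. ring.
    + intros a. rewrite <- IH, Rmult_comm, <- expect_n_scal. reflexivity.
Qed.

Definition possible_sample (p : fdist) (n : nat) (l : list R) : Prop :=
  length l = n /\ List.Forall (fun a => In a (map fst p)) l.

Section Expectation.

Variable p : fdist.
Hypothesis weights_nonneg : forall aw, In aw p -> 0 <= snd aw.
Hypothesis mean_one : mean p (fun _ => 1) = 1.

Lemma expect_n_const n c : expect_n n p (fun _ => c) = c.
Proof.
  induction n as [|n IH]; [apply expect_n_O |].
  rewrite expect_n_S, (mean_ext _ _ (fun _ => c * 1)) by (intros; rewrite IH; ring).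
  rewrite mean_scal, mean_one; ring.
Qed.

Lemma expect_n_le n f g :
  (forall l, possible_sample p n l -> f l <= g l) -> expect_n n p f <= expect_n n p g.
Proof.
  revert f g. induction n as [|n IH]; intros f g Hfg.
  - rewrite !expect_n_O. apply Hfg. split; [reflexivity | constructor].
  - rewrite !expect_n_S. apply mean_le. intros [a w] Hin. split; [exact (weights_nonneg _ Hin) |].
    apply IH. intros l [Hlen Hsupp]. apply Hfg. split; [simpl; congruence |].
    constructor; [apply (in_map fst _ _ Hin) | exact Hsupp].
Qed.

Lemma expect_n_ext_in n f g :
  (forall l, possible_sample p n l -> f l = g l) -> expect_n n p f = expect_n n p g.
Proof.
  intros Hfg.
  apply Rle_antisym; apply expect_n_le; intros l Hl; rewrite (Hfg l Hl); apply Rle_refl.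
Qed.

Lemma expect_n_nth0_nth1 n f g :
  expect_n (S (S n)) p (fun l => f (nth 0 l 0) * g (nth 1 l 0)) = mean p f * mean p g.
Proof.
  rewrite expect_n_S, (mean_ext _ _ (fun a => mean p g * f a)), mean_scal; [ring |].
  intros a. cbn [nth].
  rewrite expect_n_scal, expect_n_S, (mean_ext _ _ g); [ring |].
  intros b. exact (expect_n_const n (g b)).
Qed.

Lemma expect_n_quadratic n X c0 c1 c2 :
  expect_n n p (fun l => c0 + c1 * X l + c2 * X l ^ 2)
  = c0 + c1 * expect_n n p X + c2 * expect_n n p (fun l => X l ^ 2).
Proof.
  rewrite expect_n_plus, expect_n_plus, expect_n_const, !expect_n_scal. reflexivity.
Qed.

Lemma expect_n_Lambda_tangent n X M : M <> 0 ->
  let m := expect_n n p X in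
  expect_n n p (fun l => Lambda m + (ln m + 1) * (X l - m) + (X l - m) ^ 2 / (2 * M))
  = Lambda m + (expect_n n p (fun l => X l ^ 2) - m ^ 2) / (2 * M).
Proof.
  intros HM m.
  rewrite (expect_n_ext _ _ _ (fun l => (Lambda m - (ln m + 1) * m + m ^ 2 / (2 * M))
             + (ln m + 1 - m / M) * X l + / (2 * M) * X l ^ 2)) by (intros; field; exact HM).
  rewrite expect_n_quadratic. fold m. field. exact HM.
Qed.

Lemma expect_n_Lambda_lower n X M :
  (forall l, possible_sample p n l -> 0 < X l <= M) -> 0 < expect_n n p X ->
  Lambda (expect_n n p X) + (expect_n n p (fun l => X l ^ 2) - expect_n n p X ^ 2) / (2 * M)
  <= expect_n n p (fun l => Lambda (X l)).
Proof.
  intros HX Hm.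
  assert (HmM : expect_n n p X <= M).
  { rewrite <- (expect_n_const n M). apply expect_n_le. intros l Hl. apply HX, Hl. }
  rewrite <- expect_n_Lambda_tangent by lra.
  apply expect_n_le. intros l Hl. destruct (HX l Hl).
  apply Lambda_tangent_lower; assumption.
Qed.

Lemma expect_n_Lambda_upper n X m :
  (forall l, possible_sample p n l -> m <= X l) -> 0 < m ->
  expect_n n p (fun l => Lambda (X l))
  <= Lambda (expect_n n p X) + (expect_n n p (fun l => X l ^ 2) - expect_n n p X ^ 2) / (2 * m).
Proof.
  intros HX Hm.
  assert (HmA : m <= expect_n n p X).
  { rewrite <- (expect_n_const n m). apply expect_n_le. exact HX. }
  rewrite <- expect_n_Lambda_tangent by lra.
  apply expect_n_le. intros l Hl.
  apply Lambda_tangent_upper; [assumption | apply HX, Hl | assumption].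
Qed.

End Expectation.

Lemma is_prob_weights_nonneg p : is_prob_on_pm1 p -> forall aw, In aw p -> 0 <= snd aw.
Proof. intros [Hp _] [a w] Hin. exact (proj2 (Hp a w Hin)). Qed.

Lemma is_prob_sample_in_pm1 p n l : is_prob_on_pm1 p -> possible_sample p n l ->
  List.Forall (fun m => - 1 <= m <= 1) l.
Proof.
  intros [Hp _] [_ Hl]. apply List.Forall_impl with (2 := Hl).
  intros a Ha. apply in_map_iff in Ha as [[a' w] [<- Hin]]. exact (proj1 (Hp a' w Hin)).
Qed.

Lemma Forall_nth_default (P : R -> Prop) l i : List.Forall P l -> P 0 -> P (nth i l 0).
Proof.
  intros Hl H0. destruct (nth_in_or_default i l 0) as [Hin | ->]; [| exact H0].
  rewrite List.Forall_forall in Hl. exact (Hl _ Hin).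
Qed.

Lemma powerRZ_2_pow d t : powerRZ 2 (1 - Z.of_nat d) * t ^ d = 2 * (t / 2) ^ d.
Proof.
  replace (1 - Z.of_nat d)%Z with (1 + - Z.of_nat d)%Z by ring.
  rewrite powerRZ_add, powerRZ_neg', powerRZ_1, <- pow_powerRZ by lra.
  unfold Rdiv. rewrite Rpow_mult_distr, pow_inv. ring.
Qed.

Definition tanh_half (beta : R) : R := (1 - exp (- beta)) / (1 + exp (- beta)).

Lemma tanh_half_bounds beta : 0 < beta -> 0 < tanh_half beta < 1.
Proof.
  intros Hbeta. unfold tanh_half.
  assert (Ht : 0 < exp (- beta) < 1).
  { split; [apply exp_pos |]. rewrite <- exp_0. apply exp_increasing. lra. }
  split; [apply Rdiv_lt_0_compat; lra |].
  apply (Rmult_lt_reg_r (1 + exp (- beta))); [lra |]. field_simplify; lra.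
Qed.

(* With a = (1 + e^{-β})/2 and θ = tanh_half β, the factors 1 - (1 - e^{-β})(1 ± μ)/2
   of the integrand equal a(1 ∓ θμ): the vertex sum is a^d vertex_term and the edge
   factor is a edge_term. *)
Definition vertex_term (theta : R) (l : list R) : R :=
  prodm (fun m => 1 - theta * m) l + prodm (fun m => 1 + theta * m) l.

Definition edge_term (theta : R) (l : list R) : R := 1 - theta * (nth 0 l 0 * nth 1 l 0).

Lemma vertex_term_bounds theta s l : 0 <= theta -> theta * s < 1 ->
  List.Forall (fun m => - s <= m <= s) l ->
  0 < vertex_term theta l <= 2 * (1 + theta * s) ^ length l.
Proof.
  intros Htheta Hts Hl. rewrite List.Forall_forall in Hl.
  assert (0 < prodm (fun m => 1 - theta * m) l <= (1 + theta * s) ^ length l).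
  { apply prodm_bounds. intros m Hm. destruct (Hl m Hm). split; nra. }
  assert (0 < prodm (fun m => 1 + theta * m) l <= (1 + theta * s) ^ length l).
  { apply prodm_bounds. intros m Hm. destruct (Hl m Hm). split; nra. }
  unfold vertex_term. lra.
Qed.

Lemma edge_term_lower_bound theta s l : 0 <= theta -> 0 <= s ->
  List.Forall (fun m => - s <= m <= s) l -> 1 - theta * s ^ 2 <= edge_term theta l.
Proof.
  intros Htheta Hs Hl.
  destruct (Forall_nth_default _ _ 0 Hl ltac:(lra)).
  destruct (Forall_nth_default _ _ 1 Hl ltac:(lra)).
  assert (nth 0 l 0 * nth 1 l 0 <= s ^ 2) by nra.
  unfold edge_term. nra.
Qed.

Lemma bethe_integrand_normalized beta d l : 0 < beta -> length l = d ->
  List.Forall (fun m => - 1 <= m <= 1) l ->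
  bethe_integrand beta d l
  = INR d / 2 * ln ((1 + exp (- beta)) / 2)
      * (vertex_term (tanh_half beta) l - edge_term (tanh_half beta) l)
    + / 2 * Lambda (vertex_term (tanh_half beta) l)
    - INR d / 2 * Lambda (edge_term (tanh_half beta) l).
Proof.
  intros Hbeta Hlen Hl.
  set (t := exp (- beta)). set (a := (1 + t) / 2). set (theta := tanh_half beta).
  assert (Ht : 0 < t) by apply exp_pos.
  assert (Ha : 0 < a) by (unfold a; lra).
  assert (Htheta := tanh_half_bounds beta Hbeta). fold theta in Htheta.
  assert (HP : forall m, 1 - (1 - t) * ((1 + 1 * m) / 2) = a * (1 - theta * m))
    by (intros; unfold a, theta, tanh_half; fold t; field; lra).
  assert (HM : forall m, 1 - (1 - t) * ((1 + -1 * m) / 2) = a * (1 + theta * m))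
    by (intros; unfold a, theta, tanh_half; fold t; field; lra).
  assert (HE : 1 - (1 - t) * ((1 + nth 0 l 0 * nth 1 l 0) / 2) = a * edge_term theta l)
    by (unfold edge_term, a, theta, tanh_half; fold t; field; lra).
  destruct (vertex_term_bounds theta 1 l ltac:(lra) ltac:(lra) Hl) as [HV _].
  assert (HZ := edge_term_lower_bound theta 1 l ltac:(lra) ltac:(lra) Hl).
  unfold bethe_integrand. fold t. cbn [map fold_right].
  change (fold_right Rmult 1 (map ?h l)) with (prodm h l).
  rewrite (prodm_ext _ _ l HP), (prodm_ext _ _ l HM), HE, !prodm_scal, Hlen, powerRZ_2_pow.
  fold a.
  replace (a ^ d * prodm (fun m => 1 - theta * m) l
           + (a ^ d * prodm (fun m => 1 + theta * m) l + 0))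
    with (a ^ d * vertex_term theta l) by (unfold vertex_term; ring).
  assert (Had : 0 < a ^ d) by (apply pow_lt; exact Ha).
  rewrite !Lambda_mul by lra.
  replace (Lambda (a ^ d)) with (a ^ d * (INR d * ln a))
    by (unfold Lambda; rewrite ln_pow by exact Ha; reflexivity).
  replace (1 + t) with (2 * a) by (unfold a; field).
  replace (Lambda a) with (a * ln a) by reflexivity.
  field. lra.
Qed.

Lemma bethe_ising_normalized p beta d : is_prob_on_pm1 p -> 0 < beta ->
  let theta := tanh_half beta in
  bethe_ising p beta d
  = INR d / 2 * ln ((1 + exp (- beta)) / 2)
      * (expect_n d p (vertex_term theta) - expect_n d p (edge_term theta))
    + / 2 * expect_n d p (fun l => Lambda (vertex_term theta l))
    - INR d / 2 * expect_n d p (fun l => Lambda (edge_term theta l)).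
Proof.
  intros Hp Hbeta theta. unfold bethe_ising.
  rewrite (expect_n_ext_in _ (is_prob_weights_nonneg p Hp) _ _ (fun l =>
             INR d / 2 * ln ((1 + exp (- beta)) / 2) * (vertex_term theta l - edge_term theta l)
             + / 2 * Lambda (vertex_term theta l) - INR d / 2 * Lambda (edge_term theta l))).
  - rewrite expect_n_minus, expect_n_plus, !expect_n_scal, expect_n_minus. reflexivity.
  - intros l Hl. apply bethe_integrand_normalized; [exact Hbeta | apply Hl |].
    exact (is_prob_sample_in_pm1 p d l Hp Hl).
Qed.

Lemma pi_star_is_prob eps : - 1 <= 2 * eps <= 1 -> is_prob_on_pm1 (pi_star eps).
Proof.
  intros Heps. split.
  - intros a w [Haw | [Haw | []]]; injection Haw as <- <-; split; try lra;
      apply Rlt_le, Rinv_0_lt_compat; lra.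
  - simpl. field.
Qed.

Lemma mean_pi_star eps g : mean (pi_star eps) g = (g (2 * eps) + g (- (2 * eps))) / 2.
Proof. simpl. field. Qed.

Lemma pi_star_mean_one eps : mean (pi_star eps) (fun _ => 1) = 1.
Proof. rewrite mean_pi_star. field. Qed.

Lemma pi_star_sample_bounds eps n l : 0 <= eps -> possible_sample (pi_star eps) n l ->
  List.Forall (fun m => - (2 * eps) <= m <= 2 * eps) l.
Proof.
  intros Heps [_ Hl]. apply List.Forall_impl with (2 := Hl).
  intros m [<- | [<- | []]]; simpl; lra.
Qed.

Section PiStarMoments.

Variables (eps theta : R) (n : nat).

Lemma expect_vertex_term : expect_n n (pi_star eps) (vertex_term theta) = 2.
Proof.
  unfold vertex_term. rewrite expect_n_plus, !expect_n_prod, !mean_pi_star.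
  replace ((1 - theta * (2 * eps) + (1 - theta * - (2 * eps))) / 2) with 1 by field.
  replace ((1 + theta * (2 * eps) + (1 + theta * - (2 * eps))) / 2) with 1 by field.
  rewrite pow1. ring.
Qed.

Lemma expect_vertex_term_sq :
  expect_n n (pi_star eps) (fun l => vertex_term theta l ^ 2)
  = 2 * (1 + (theta * (2 * eps)) ^ 2) ^ n + 2 * (1 - (theta * (2 * eps)) ^ 2) ^ n.
Proof.
  rewrite (expect_n_ext _ _ _ (fun l =>
             prodm (fun m => (1 - theta * m) * (1 - theta * m)) l
             + 2 * prodm (fun m => (1 - theta * m) * (1 + theta * m)) l
             + prodm (fun m => (1 + theta * m) * (1 + theta * m)) l)).
  - rewrite !expect_n_plus, expect_n_scal, !expect_n_prod, !mean_pi_star.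
    replace (((1 - theta * (2 * eps)) * (1 - theta * (2 * eps))
              + (1 - theta * - (2 * eps)) * (1 - theta * - (2 * eps))) / 2)
      with (1 + (theta * (2 * eps)) ^ 2) by field.
    replace (((1 - theta * (2 * eps)) * (1 + theta * (2 * eps))
              + (1 - theta * - (2 * eps)) * (1 + theta * - (2 * eps))) / 2)
      with (1 - (theta * (2 * eps)) ^ 2) by field.
    replace (((1 + theta * (2 * eps)) * (1 + theta * (2 * eps))
              + (1 + theta * - (2 * eps)) * (1 + theta * - (2 * eps))) / 2)
      with (1 + (theta * (2 * eps)) ^ 2) by field.
    ring.
  - intros l. unfold vertex_term. rewrite <- !prodm_mul. ring.
Qed.

Lemma expect_edge_term_moments :
  expect_n (S (S n)) (pi_star eps) (edge_term theta) = 1 /\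
  expect_n (S (S n)) (pi_star eps) (fun l => edge_term theta l ^ 2) = 1 + theta ^ 2 * (2 * eps) ^ 4.
Proof.
  set (X := fun l => nth 0 l 0 * nth 1 l 0).
  assert (HX : expect_n (S (S n)) (pi_star eps) X = 0).
  { unfold X.
    rewrite (expect_n_nth0_nth1 _ (pi_star_mean_one eps) n (fun m => m) (fun m => m)).
    rewrite mean_pi_star.
    field. }
  assert (HX2 : expect_n (S (S n)) (pi_star eps) (fun l => X l ^ 2) = (2 * eps) ^ 4).
  { rewrite (expect_n_ext _ _ _ (fun l => nth 0 l 0 ^ 2 * nth 1 l 0 ^ 2))
      by (intros; unfold X; ring).
    rewrite (expect_n_nth0_nth1 _ (pi_star_mean_one eps) n (fun m => m ^ 2) (fun m => m ^ 2)).
    rewrite mean_pi_star.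
    field. }
  split.
  - rewrite (expect_n_ext _ _ _ (fun l => 1 + - theta * X l + 0 * X l ^ 2))
      by (intros; unfold edge_term, X; ring).
    rewrite expect_n_quadratic by apply pi_star_mean_one. rewrite HX. ring.
  - rewrite (expect_n_ext _ _ _ (fun l => 1 + (- 2 * theta) * X l + theta ^ 2 * X l ^ 2))
      by (intros; unfold edge_term, X; ring).
    rewrite expect_n_quadratic by apply pi_star_mean_one. rewrite HX, HX2. ring.
Qed.

Hypotheses (Htheta : 0 < theta < 1) (Heps : 0 < 2 * eps <= 1).

Lemma expect_Lambda_vertex_term_ge :
  2 * ln 2 + ((1 + (theta * (2 * eps)) ^ 2) ^ n + (1 - (theta * (2 * eps)) ^ 2) ^ n - 2)
             / (2 * (1 + theta * (2 * eps)) ^ n)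
  <= expect_n n (pi_star eps) (fun l => Lambda (vertex_term theta l)).
Proof.
  assert (Hp := pi_star_is_prob eps ltac:(lra)).
  assert (HP : 0 < (1 + theta * (2 * eps)) ^ n) by (apply pow_lt; nra).
  assert (Hbound : forall l, possible_sample (pi_star eps) n l ->
                     0 < vertex_term theta l <= 2 * (1 + theta * (2 * eps)) ^ n).
  { intros l Hl. rewrite <- (proj1 Hl). apply vertex_term_bounds; [lra | nra |].
    apply pi_star_sample_bounds with n; [lra | exact Hl]. }
  assert (HV := expect_n_Lambda_lower _ (is_prob_weights_nonneg _ Hp) (pi_star_mean_one eps)
                  n _ _ Hbound).
  rewrite expect_vertex_term, expect_vertex_term_sq in HV.
  eapply Rle_trans; [| apply HV; lra]. unfold Lambda. right. field. lra.
Qed.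

Lemma expect_Lambda_edge_term_le :
  expect_n (S (S n)) (pi_star eps) (fun l => Lambda (edge_term theta l))
  <= theta ^ 2 * (2 * eps) ^ 4 / (2 * (1 - theta * (2 * eps) ^ 2)).
Proof.
  assert (Hp := pi_star_is_prob eps ltac:(lra)).
  assert (Hm : 0 < 1 - theta * (2 * eps) ^ 2) by (assert ((2 * eps) ^ 2 <= 1) by nra; nra).
  assert (Hbound : forall l, possible_sample (pi_star eps) (S (S n)) l ->
                     1 - theta * (2 * eps) ^ 2 <= edge_term theta l).
  { intros l Hl. apply edge_term_lower_bound; [lra | lra |].
    apply pi_star_sample_bounds with (S (S n)); [lra | exact Hl]. }
  assert (HZ := expect_n_Lambda_upper _ (is_prob_weights_nonneg _ Hp) (pi_star_mean_one eps)
                  _ _ _ Hbound Hm).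
  destruct expect_edge_term_moments as [HZ1 HZ2]. rewrite HZ1, HZ2 in HZ.
  eapply Rle_trans; [exact HZ |]. unfold Lambda. rewrite ln_1. right. field. lra.
Qed.

End PiStarMoments.

(* Var V / (4 max V) - (d/2) Var Z / (2 min Z) under π*_ε with s = 2ε, using the bounds
   max V <= 2(1 + θs)^d and min Z >= 1 - θs^2. *)
Definition excess_bound (d : nat) (theta s : R) : R :=
  ((1 + (theta * s) ^ 2) ^ d + (1 - (theta * s) ^ 2) ^ d - 2) / (4 * (1 + theta * s) ^ d)
  - INR d * theta ^ 2 * s ^ 4 / (4 * (1 - theta * s ^ 2)).

Lemma bethe_ising_pi_star_ge d beta eps : (2 <= d)%nat -> 0 < beta -> 0 < 2 * eps <= 1 ->
  ln 2 + INR d / 2 * ln ((1 + exp (- beta)) / 2) + excess_bound d (tanh_half beta) (2 * eps)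
  <= bethe_ising (pi_star eps) beta d.
Proof.
  intros Hd Hbeta Heps.
  destruct d as [|[|n]]; [lia | lia |].
  assert (Htheta := tanh_half_bounds beta Hbeta).
  rewrite bethe_ising_normalized; [| apply pi_star_is_prob; lra | exact Hbeta].
  rewrite expect_vertex_term, (proj1 (expect_edge_term_moments _ _ n)).
  assert (HV := expect_Lambda_vertex_term_ge eps _ (S (S n)) Htheta Heps).
  assert (HZ := expect_Lambda_edge_term_le eps _ n Htheta Heps).
  set (d := S (S n)) in *. set (theta := tanh_half beta) in *. set (s := 2 * eps) in *.
  assert (Hm : 0 < 1 - theta * s ^ 2) by (assert (s ^ 2 <= 1) by nra; nra).
  assert (HP : 0 < (1 + theta * s) ^ d) by (apply pow_lt; nra).
  assert (HdZ := Rmult_le_compat_l (INR d / 2) _ _ ltac:(pose proof (pos_INR d); lra) HZ).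
  unfold excess_bound.
  replace (INR d * theta ^ 2 * s ^ 4 / (4 * (1 - theta * s ^ 2)))
    with (INR d / 2 * (theta ^ 2 * s ^ 4 / (2 * (1 - theta * s ^ 2)))) by (field; lra).
  replace (((1 + (theta * s) ^ 2) ^ d + (1 - (theta * s) ^ 2) ^ d - 2) / (2 * (1 + theta * s) ^ d))
    with (2 * (((1 + (theta * s) ^ 2) ^ d + (1 - (theta * s) ^ 2) ^ d - 2)
               / (4 * (1 + theta * s) ^ d))) in HV by (field; lra).
  lra.
Qed.

(* The second inequality only serves to carry the induction. *)
Lemma binomial_lower_bounds n x : 0 <= x ->
  2 + INR n * (INR n - 1) * x ^ 2 <= (1 + x) ^ n + (1 - x) ^ n /\
  2 * INR n * x <= (1 + x) ^ n - (1 - x) ^ n.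
Proof.
  intros Hx. induction n as [|n [IHeven IHodd]]; [simpl; lra |].
  rewrite S_INR. simpl.
  assert (Hn : 0 <= INR n * (INR n - 1) * x ^ 2).
  { destruct n as [|n]; [simpl; lra |].
    rewrite S_INR. pose proof (pos_INR n). apply Rmult_le_pos; [nra | apply pow2_ge_0]. }
  assert (x * (2 * INR n * x) <= x * ((1 + x) ^ n - (1 - x) ^ n))
    by (apply Rmult_le_compat_l; lra).
  assert (x * 2 <= x * ((1 + x) ^ n + (1 - x) ^ n)) by (apply Rmult_le_compat_l; lra).
  split; nra.
Qed.

Lemma excess_bound_pos d theta s : (2 <= d)%nat -> 0 < theta < 1 -> 0 < s <= 1 ->
  (1 + theta * s) ^ d < (INR d - 1) * theta ^ 2 * (1 - theta * s ^ 2) ->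
  0 < excess_bound d theta s.
Proof.
  intros Hd Htheta Hs Hsmall.
  assert (HP : 0 < (1 + theta * s) ^ d) by (apply pow_lt; nra).
  assert (HdR : 2 <= INR d) by (apply le_INR in Hd; simpl in Hd; lra).
  assert (Hm : 0 < 1 - theta * s ^ 2) by (assert (s ^ 2 <= 1) by nra; nra).
  set (P := (1 + theta * s) ^ d) in *. set (m := 1 - theta * s ^ 2) in *.
  set (B := INR d * theta ^ 2 * s ^ 4).
  assert (HB : 0 < B) by (unfold B; apply Rmult_lt_0_compat; [nra | apply pow_lt; lra]).
  destruct (binomial_lower_bounds d ((theta * s) ^ 2) ltac:(apply pow2_ge_0)) as [Hbin _].
  assert (Hlow : B * (INR d - 1) * theta ^ 2 / (4 * P)
                 <= ((1 + (theta * s) ^ 2) ^ d + (1 - (theta * s) ^ 2) ^ d - 2) / (4 * P)).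
  { apply Rmult_le_compat_r; [apply Rlt_le, Rinv_0_lt_compat; lra |]. unfold B. nra. }
  assert (Hcmp : B / (4 * m) < B * (INR d - 1) * theta ^ 2 / (4 * P)).
  { replace (B / (4 * m)) with (B * P * / (4 * P * m)) by (field; lra).
    replace (B * (INR d - 1) * theta ^ 2 / (4 * P))
      with (B * ((INR d - 1) * theta ^ 2 * m) * / (4 * P * m)) by (field; lra).
    apply Rmult_lt_compat_r; [apply Rinv_0_lt_compat; nra |].
    apply Rmult_lt_compat_l; assumption. }
  unfold excess_bound. fold P m B. lra.
Qed.

Lemma continuity_pt_pos_nbhd f x : continuity_pt f x -> 0 < f x ->
  exists delta, 0 < delta /\ forall y, Rabs (y - x) < delta -> 0 < f y.
Proof.
  intros Hc Hpos.
  destruct (Hc (f x) Hpos) as [delta [Hdelta Hnear]].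
  exists delta. split; [exact Hdelta |]. intros y Hy.
  destruct (Req_dec x y) as [<- | Hne]; [exact Hpos |].
  specialize (Hnear y (conj (conj I Hne) Hy)). simpl in Hnear. unfold R_dist in Hnear.
  apply Rabs_def2 in Hnear. lra.
Qed.

Lemma small_scale_exists (d : nat) theta c : 1 < c ->
  exists s, 0 < s <= 1 /\ (1 + theta * s) ^ d < c * (1 - theta * s ^ 2).
Proof.
  intros Hc.
  destruct (continuity_pt_pos_nbhd (fun s => c * (1 - theta * s ^ 2) - (1 + theta * s) ^ d) 0)
    as [delta [Hdelta Hnear]].
  - reg.
  - rewrite Rmult_0_r, pow_ne_zero, Rmult_0_r, Rplus_0_r, pow1 by discriminate. lra.
  - exists (Rmin (delta / 2) 1). split.
    + split; [apply Rmin_glb_lt; lra | apply Rmin_r].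
    + enough (0 < c * (1 - theta * Rmin (delta / 2) 1 ^ 2) - (1 + theta * Rmin (delta / 2) 1) ^ d)
        by lra.
      apply Hnear. rewrite Rminus_0_r, Rabs_pos_eq.
      * apply Rle_lt_trans with (delta / 2); [apply Rmin_l | lra].
      * apply Rmin_glb; lra.
Qed.

Lemma sqrt_d_minus_1_gt_1 d : (3 <= d)%nat -> 1 < sqrt (INR d - 1).
Proof.
  intros Hd. apply le_INR in Hd. simpl in Hd.
  rewrite <- sqrt_1 at 1. apply sqrt_lt_1_alt. lra.
Qed.

Lemma beta_star_pos d : (3 <= d)%nat -> 0 < beta_star d.
Proof.
  intros Hd. pose proof (sqrt_d_minus_1_gt_1 d Hd) as Hr.
  unfold beta_star. rewrite <- ln_1. apply ln_increasing; [lra |].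
  apply (Rmult_lt_reg_r (sqrt (INR d - 1) - 1)); [lra |]. field_simplify; lra.
Qed.

Lemma beta_star_threshold d beta : (3 <= d)%nat -> beta_star d < beta ->
  1 < (INR d - 1) * tanh_half beta ^ 2.
Proof.
  intros Hd Hbeta. pose proof (sqrt_d_minus_1_gt_1 d Hd) as Hr.
  assert (Hr2 : sqrt (INR d - 1) * sqrt (INR d - 1) = INR d - 1)
    by (apply sqrt_sqrt; apply le_INR in Hd; simpl in Hd; lra).
  unfold beta_star, tanh_half in *. rewrite <- Hr2. set (r := sqrt (INR d - 1)) in *.
  assert (Hexp : (r + 1) / (r - 1) < exp beta).
  { rewrite <- (exp_ln ((r + 1) / (r - 1))) by (apply Rdiv_lt_0_compat; lra).
    apply exp_increasing. exact Hbeta. }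
  assert (Hinv : exp (- beta) * exp beta = 1) by (rewrite <- exp_plus, Rplus_opp_l; apply exp_0).
  pose proof (exp_pos (- beta)) as Ht.
  assert (Hrt : exp (- beta) * (r + 1) < r - 1).
  { apply (Rmult_lt_compat_r (r - 1)) in Hexp; [| lra].
    replace ((r + 1) / (r - 1) * (r - 1)) with (r + 1) in Hexp by (field; lra).
    nra. }
  assert (Hthr : 1 < r * ((1 - exp (- beta)) / (1 + exp (- beta)))).
  { apply (Rmult_lt_reg_r (1 + exp (- beta))); [lra |]. field_simplify; lra. }
  nra.
Qed.

Theorem proposition2p8 (d : nat) (beta : R) :
  (3 <= d)%nat -> beta > beta_star d ->
  exists eps : R, 0 < eps /\ is_prob_on_pm1 (pi_star eps) /\
    bethe_ising (pi_star eps) beta d >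
      ln 2 + INR d / 2 * ln ((1 + exp (- beta)) / 2).
Proof.
  intros Hd Hbeta.
  assert (Hbeta0 : 0 < beta) by (pose proof (beta_star_pos d Hd); lra).
  destruct (small_scale_exists d (tanh_half beta) _ (beta_star_threshold d beta Hd Hbeta))
    as [s [Hs Hsmall]].
  exists (s / 2). split; [lra |]. split; [apply pi_star_is_prob; lra |].
  apply Rlt_le_trans with (ln 2 + INR d / 2 * ln ((1 + exp (- beta)) / 2)
                           + excess_bound d (tanh_half beta) (2 * (s / 2))).
  - replace (2 * (s / 2)) with s by field.
    assert (0 < excess_bound d (tanh_half beta) s)
      by (apply excess_bound_pos; [lia | apply tanh_half_bounds, Hbeta0 | exact Hs | exact Hsmall]).
    lra.
  - apply bethe_ising_pi_star_ge; [lia | exact Hbeta0 | lra].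
Qed.
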